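(* Let $\mathfrak{g}$ be a complex simple Lie algebra with Weyl group $W$, and let $\lambda_1,\lambda_2,\lambda_3,\lambda_4$ be dominant integral weights such that $\lambda_1+\lambda_2=\lambda=\lambda_3+\lambda_4$ and, for every positive root $\alpha$, $|(\lambda_1-\lambda_2)(\alpha^\vee)|\le|(\lambda_3-\lambda_4)(\alpha^\vee)|$. Suppose in addition that $P_{\lambda_1,\lambda_2}\subseteq C_f$ and $P_{\lambda_3,\lambda_4}\subseteq C_f$. Then $P_{\lambda_3,\lambda_4}\subseteq P_{\lambda_1,\lambda_2}$.
   Context: For dominant weights $\mu,\nu$, $P_{\mu,\nu}=\operatorname{Conv}\{\mu+w\nu : w\in W\}\subset P\otimes\mathbb{R}$, where $P$ is the weight lattice and $\operatorname{Conv}$ denotes convex hull. $C_f=\{x\in P\otimes\mathbb{R} : x(\alpha_i^\vee)\ge 0 \text{ for all simple coroots } \alpha_i^\vee\}$ is the (closed) fundamental Weyl chamber. $\alpha^\vee$ denotes the coroot of the root $\alpha$. *)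

From HB Require Import structures.
From mathcomp Require Import all_boot all_order all_algebra.
From mathcomp Require Import reals.
Set Implicit Arguments. Unset Strict Implicit. Unset Printing Implicit Defensive.
Import Order.TTheory GRing.Theory Num.Theory.
Local Open Scope ring_scope.

(* The root system of a complex simple Lie algebra, realized in the
   Euclidean space R^n = 'rV[R]_n (n = rank) with the standard inner product
   (the real span of the roots, i.e. P (x) R, with the Killing-form-induced
   inner product). *)
Section RootData.
Variables (R : realType) (n : nat).
Notation vec := 'rV[R]_n.

Definition dot (u v : vec) : R := (u *m v^T) 0 0.

(* x(a^vee) = 2 (x,a)/(a,a) *)
Definition pairing (x a : vec) : R := 2 * dot x a / dot a a.

Definition refl (a x : vec) : vec := x - pairing x a *: a.

(* irreducible reduced crystallographic root system spanning R^n
   (= root system of a complex simple Lie algebra of rank n) *)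
Record is_simple_root_system (Phi : seq vec) : Prop := {
  rs_nonempty : Phi != [::];
  rs_nonzero : 0 \notin Phi;
  rs_span : forall x : vec, exists c : 'I_(size Phi) -> R,
      x = \sum_(i < size Phi) c i *: Phi`_i;
  rs_refl : forall a b, a \in Phi -> b \in Phi -> refl a b \in Phi;
  rs_cryst : forall a b, a \in Phi -> b \in Phi ->
      exists z : int, pairing b a = z%:~R;
  rs_reduced : forall a (c : R), a \in Phi -> c *: a \in Phi -> c = 1 \/ c = -1;
  rs_irred : forall P : vec -> bool,
      (forall a b, a \in Phi -> b \in Phi -> P a -> ~~ P b -> dot a b = 0) ->
      (forall a, a \in Phi -> P a) \/ (forall a, a \in Phi -> ~~ P a)
}.

Record is_base (Phi Delta : seq vec) : Prop := {
  base_sub : {subset Delta <= Phi};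
  base_indep : forall c : 'I_(size Delta) -> R,
      \sum_(i < size Delta) c i *: Delta`_i = 0 -> forall i, c i = 0;
  base_decomp : forall a, a \in Phi -> exists c : 'I_(size Delta) -> int,
      a = \sum_(i < size Delta) (c i)%:~R *: Delta`_i /\
      ((forall i, 0 <= c i) \/ (forall i, c i <= 0))
}.

Definition positive_root (Phi Delta : seq vec) (a : vec) : Prop :=
  a \in Phi /\ exists c : 'I_(size Delta) -> int,
    a = \sum_(i < size Delta) (c i)%:~R *: Delta`_i /\ forall i, 0 <= c i.

Definition weyl_elt (Phi : seq vec) (w : vec -> vec) : Prop :=
  exists s : seq vec, {subset s <= Phi} /\
    forall x, w x = foldr (fun a y => refl a y) x s.

Definition is_weight (Phi : seq vec) (x : vec) : Prop :=
  forall a, a \in Phi -> exists z : int, pairing x a = z%:~R.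

Definition fund_chamber (Delta : seq vec) (x : vec) : Prop :=
  forall a, a \in Delta -> 0 <= pairing x a.

Definition dominant_weight (Phi Delta : seq vec) (x : vec) : Prop :=
  is_weight Phi x /\ fund_chamber Delta x.

Definition conv (S : vec -> Prop) (x : vec) : Prop :=
  exists (k : nat) (p : 'I_k -> vec) (t : 'I_k -> R),
    (forall i, S (p i)) /\ (forall i, 0 <= t i) /\
    \sum_(i < k) t i = 1 /\ x = \sum_(i < k) t i *: p i.

Definition Ppoly (Phi : seq vec) (mu nu : vec) : vec -> Prop :=
  conv (fun y => exists w, weyl_elt Phi w /\ y = mu + w nu).

Definition psubset (A B : vec -> Prop) : Prop := forall x, A x -> B x.

End RootData.

From HB Require Import structures.
From mathcomp Require Import all_boot all_order all_algebra.
From mathcomp Require Import reals.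
From mathcomp Require Import ring lra zify.
From Stdlib Require Import Classical.
Set Implicit Arguments. Unset Strict Implicit. Unset Printing Implicit Defensive.
Import Order.TTheory GRing.Theory Num.Theory.
Local Open Scope ring_scope.

(* Put d := l3 - l1.  The vertices l1 + s_a l2 and l3 + s_a l4 (a simple) lie
   in C_f, so l1 >= l2 and l3 >= l4 on simple coroots, and the hypothesis at the
   simple roots then says exactly that d is dominant; moreover l2 = d + l4.
   Each vertex l3 + w l4 equals l1 + (d + w l4), so it suffices that d + w l4
   lies in Conv(W l2) whenever d and l4 are dominant.  Write w = s_a w' as a
   word in simple reflections that cannot be shortened; then w'^-1 a is a
   positive root, so (w' l4)(a^vee) >= 0 and d + s_a w' l4 lies on the segment
   from d + w' l4 to its mirror image s_a (d + w' l4); both ends are in the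
   convex, W-stable set Conv(W l2) by induction. *)

Section InnerProduct.
Variables (R : realType) (n : nat).
Implicit Types (u v w : 'rV[R]_n).

Lemma dotE u v : dot u v = \sum_j u 0 j * v 0 j.
Proof. by rewrite /dot !mxE; apply: eq_bigr => j _; rewrite mxE. Qed.

Lemma dotC u v : dot u v = dot v u.
Proof. by rewrite !dotE; apply: eq_bigr => j _; rewrite mulrC. Qed.

Lemma dotDl u v w : dot (u + v) w = dot u w + dot v w.
Proof. by rewrite /dot mulmxDl mxE. Qed.

Lemma dotZl c u w : dot (c *: u) w = c * dot u w.
Proof. by rewrite /dot -scalemxAl mxE. Qed.

Lemma dotNl u w : dot (- u) w = - dot u w.
Proof. by rewrite -scaleN1r dotZl mulN1r. Qed.

Lemma dotBl u v w : dot (u - v) w = dot u w - dot v w.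
Proof. by rewrite dotDl dotNl. Qed.

Lemma dotDr u v w : dot w (u + v) = dot w u + dot w v.
Proof. by rewrite dotC dotDl !(dotC w). Qed.

Lemma dotZr c u w : dot w (c *: u) = c * dot w u.
Proof. by rewrite dotC dotZl dotC. Qed.

Lemma dotNr u w : dot w (- u) = - dot w u.
Proof. by rewrite dotC dotNl dotC. Qed.

Lemma dotBr u v w : dot w (u - v) = dot w u - dot w v.
Proof. by rewrite dotDr dotNr. Qed.

Lemma dot_sumr k (F : 'I_k -> 'rV[R]_n) w :
  dot w (\sum_(i < k) F i) = \sum_(i < k) dot w (F i).
Proof.
elim: k F => [|k IH] F; last by rewrite !big_ord_recr /= dotDr IH.
by rewrite !big_ord0 /dot trmx0 mulmx0 mxE.
Qed.

Lemma dot_gt0 u : u != 0 -> 0 < dot u u.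
Proof.
apply: contraNT; rewrite -leNgt dotE => le0; apply/eqP/rowP => j; rewrite mxE.
have sq_ge0 i : 0 <= u 0 i * u 0 i by rewrite -expr2 sqr_ge0.
have /psumr_eq0P/(_ j isT) : \sum_i u 0 i * u 0 i = 0.
  by apply/eqP; rewrite eq_le le0 sumr_ge0.
by move=> /(_ (fun i _ => sq_ge0 i))/eqP; rewrite -expr2 sqrf_eq0 => /eqP.
Qed.

End InnerProduct.

Section Reflections.
Variables (R : realType) (n : nat).
Implicit Types (x y a b : 'rV[R]_n).

Lemma pairingDl x y a : pairing (x + y) a = pairing x a + pairing y a.
Proof. by rewrite /pairing dotDl mulrDr mulrDl. Qed.

Lemma pairingZl c x a : pairing (c *: x) a = c * pairing x a.
Proof. by rewrite /pairing dotZl !mulrA (mulrC 2 c). Qed.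

Lemma pairingBl x y a : pairing (x - y) a = pairing x a - pairing y a.
Proof. by rewrite pairingDl -scaleN1r pairingZl mulN1r. Qed.

Lemma pairing_ge0E x a : a != 0 -> (0 <= pairing x a) = (0 <= dot x a).
Proof.
move=> /dot_gt0 aa_gt0; rewrite /pairing -mulrA pmulr_rge0 //.
by rewrite pmulr_lge0 // invr_gt0.
Qed.

Lemma pairing_gt0E x a : a != 0 -> (0 < pairing x a) = (0 < dot x a).
Proof.
move=> /dot_gt0 aa_gt0; rewrite /pairing -mulrA pmulr_rgt0 //.
by rewrite pmulr_lgt0 // invr_gt0.
Qed.

Lemma pairing_self a : a != 0 -> pairing a a = 2.
Proof. by move=> /dot_gt0/lt0r_neq0 aa_neq0; rewrite /pairing mulfK. Qed.

Lemma reflD a x y : refl a (x + y) = refl a x + refl a y.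
Proof. by rewrite /refl pairingDl scalerDl opprD addrACA. Qed.

Lemma reflZ a c x : refl a (c *: x) = c *: refl a x.
Proof. by rewrite /refl pairingZl scalerBr scalerA. Qed.

Lemma reflB a x y : refl a (x - y) = refl a x - refl a y.
Proof. by rewrite reflD -scaleN1r reflZ scaleN1r. Qed.

Lemma refl_sum a k (F : 'I_k -> 'rV[R]_n) :
  refl a (\sum_(i < k) F i) = \sum_(i < k) refl a (F i).
Proof.
elim: k F => [|k IH] F; last by rewrite !big_ord_recr /= reflD IH.
by rewrite !big_ord0 /refl -(scale0r 0) pairingZl mul0r !scale0r subr0.
Qed.

Lemma refl_self a : a != 0 -> refl a a = - a.
Proof.
by move=> a_neq0; rewrite /refl pairing_self // scaler_nat mulr2n opprD addNKr.
Qed.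

Lemma pairing_refll a x : a != 0 -> pairing (refl a x) a = - pairing x a.
Proof. by move=> a_neq0; rewrite /refl pairingBl pairingZl pairing_self //; lra. Qed.

Lemma reflK a x : a != 0 -> refl a (refl a x) = x.
Proof.
move=> a_neq0; rewrite [refl a x]/refl reflB reflZ refl_self //.
by rewrite /refl scalerN opprK subrK.
Qed.

Lemma dot_refl a x y : a != 0 -> dot (refl a x) (refl a y) = dot x y.
Proof.
move=> /dot_gt0/lt0r_neq0 aa_neq0.
by rewrite /refl dotBl !dotBr !dotZl !dotZr /pairing (dotC a y); field.
Qed.

Lemma pairing_refl a x y : a != 0 -> pairing (refl a x) (refl a y) = pairing x y.
Proof. by move=> a_neq0; rewrite /pairing !dot_refl. Qed.

Lemma refl_conj a b y : a != 0 -> refl (refl a b) y = refl a (refl b (refl a y)).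
Proof.
move=> a_neq0; rewrite [refl (refl a b) y]/refl reflB reflZ reflK //.
by rewrite -(pairing_refl (refl a y) b a_neq0) reflK.
Qed.

Lemma refl_opp_root a x : refl (- a) x = refl a x.
Proof.
by rewrite /refl /pairing dotNr dotNl dotNr opprK mulrN mulNr scaleNr scalerN opprK.
Qed.

End Reflections.

Section Words.
Variables (R : realType) (n : nat).
Implicit Types (x y a : 'rV[R]_n) (s r : seq 'rV[R]_n).

Definition reflw s x := foldr (fun a y => refl a y) x s.

Lemma reflw_cons a s x : reflw (a :: s) x = refl a (reflw s x).
Proof. by []. Qed.

Lemma reflw_cat s r x : reflw (s ++ r) x = reflw s (reflw r x).
Proof. exact: foldr_cat. Qed.

Lemma reflw_revK s x : 0 \notin s -> reflw (rev s) (reflw s x) = x.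
Proof.
elim: s x => //= a s IH x; rewrite inE negb_or eq_sym => /andP[a_neq0 s_neq0].
by rewrite rev_cons -cats1 reflw_cat /= reflK // IH.
Qed.

Lemma reflw_Krev s x : 0 \notin s -> reflw s (reflw (rev s) x) = x.
Proof. by move=> s_neq0; rewrite -{1}(revK s) reflw_revK // mem_rev. Qed.

Lemma reflw_pairing s x y : 0 \notin s ->
  pairing (reflw s x) (reflw s y) = pairing x y.
Proof.
elim: s => //= a s IH; rewrite inE negb_or eq_sym => /andP[a_neq0 s_neq0].
by rewrite pairing_refl // IH.
Qed.

Lemma reflw_conj r a y : 0 \notin r ->
  refl (reflw r a) y = reflw r (refl a (reflw (rev r) y)).
Proof.
elim: r y => //= b r IH y; rewrite inE negb_or eq_sym => /andP[b_neq0 r_neq0].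
by rewrite refl_conj // IH // rev_cons -cats1 reflw_cat.
Qed.

End Words.

Section ConvexHull.
Variables (R : realType) (n : nat).
Implicit Types (x y v : 'rV[R]_n) (S T K : 'rV[R]_n -> Prop).

Definition convex_set K := forall x y t, K x -> K y -> 0 <= t <= 1 ->
  K ((1 - t) *: x + t *: y).

(* [conv S] is [nonneg_comb S 1]; dropping the normalisation of the weights
   makes the combinations closed under sums and nonnegative scaling. *)
Definition nonneg_comb S (s : R) x :=
  exists k (p : 'I_k -> 'rV[R]_n) (t : 'I_k -> R),
  (forall i, S (p i)) /\ (forall i, 0 <= t i) /\
  \sum_(i < k) t i = s /\ x = \sum_(i < k) t i *: p i.

Lemma nonneg_comb0 S : nonneg_comb S 0 0.
Proof. by exists 0%N, (fun=> 0), (fun=> 0); rewrite !big_ord0; do !split; case. Qed.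

Lemma nonneg_combD S s1 s2 x1 x2 :
  nonneg_comb S s1 x1 -> nonneg_comb S s2 x2 -> nonneg_comb S (s1 + s2) (x1 + x2).
Proof.
move=> [k1 [p1 [t1 [S1 [t1_ge0 [<- ->]]]]]] [k2 [p2 [t2 [S2 [t2_ge0 [<- ->]]]]]].
pose glue A (f1 : 'I_k1 -> A) (f2 : 'I_k2 -> A) i :=
  match split i with inl j => f1 j | inr j => f2 j end.
have glue_l A f1 f2 j : glue A f1 f2 (lshift k2 j) = f1 j.
  by rewrite /glue (unsplitK (inl j)).
have glue_r A f1 f2 j : glue A f1 f2 (rshift k1 j) = f2 j.
  by rewrite /glue (unsplitK (inr j)).
exists (k1 + k2)%N, (glue _ p1 p2), (glue _ t1 t2); split; [|split; [|split]];
  try by move=> i; rewrite /glue; case: (split i).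
all: by rewrite big_split_ord /=; congr (_ + _); apply: eq_bigr => j _;
  rewrite ?glue_l ?glue_r.
Qed.

Lemma nonneg_combZ S s x c :
  0 <= c -> nonneg_comb S s x -> nonneg_comb S (c * s) (c *: x).
Proof.
move=> c_ge0 [k [p [t [Sp [t_ge0 [<- ->]]]]]].
exists k, p, (fun i => c * t i); split; [|split; [|split]] => //.
- by move=> i; rewrite mulr_ge0.
- by rewrite mulr_sumr.
- by rewrite scaler_sumr; apply: eq_bigr => i _; rewrite scalerA.
Qed.

Lemma conv_pt S y : S y -> conv S y.
Proof.
by move=> Sy; exists 1%N, (fun=> y), (fun=> 1); rewrite !big_ord1 scale1r.
Qed.

Lemma conv_sub S T x : (forall y, S y -> T y) -> conv S x -> conv T x.
Proof.
move=> ST [k [p [t [Sp [t_ge0 [t_sum ->]]]]]].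
by exists k, p, t; split=> // i; apply/ST/Sp.
Qed.

Lemma conv_conv S T x : (forall y, S y -> conv T y) -> conv S x -> conv T x.
Proof.
move=> ST [k [p [t [Sp [t_ge0 [t_sum ->]]]]]].
suff : nonneg_comb T (\sum_(i < k) t i) (\sum_(i < k) t i *: p i) by rewrite t_sum.
move=> {t_sum}; elim: k p t Sp t_ge0 => [|k IH] p t Sp t_ge0.
  by rewrite !big_ord0; exact: nonneg_comb0.
rewrite !big_ord_recr /=; apply: nonneg_combD.
  by apply: IH => i; [apply: Sp|apply: t_ge0].
by have := nonneg_combZ (t_ge0 ord_max) (ST _ (Sp ord_max)); rewrite mulr1.
Qed.

Lemma conv_convex S : convex_set (conv S).
Proof.
move=> x y t Sx Sy /andP[t_ge0 t_le1].
have := nonneg_combD (nonneg_combZ (x := x) (_ : 0 <= 1 - t) Sx) (nonneg_combZ t_ge0 Sy).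
by rewrite !mulr1 subrK; apply; rewrite subr_ge0.
Qed.

Lemma conv_refl S a x :
  (forall y, S y -> S (refl a y)) -> conv S x -> conv S (refl a x).
Proof.
move=> S_refl [k [p [t [Sp [t_ge0 [t_sum ->]]]]]].
exists k, (fun i => refl a (p i)), t; split; [|split; [|split]] => //.
  by move=> i; apply/S_refl/Sp.
by rewrite refl_sum; apply: eq_bigr => i _; rewrite reflZ.
Qed.

Lemma conv_shift S v x :
  conv S x -> conv (fun y => exists2 z, S z & y = v + z) (v + x).
Proof.
move=> [k [p [t [Sp [t_ge0 [t_sum ->]]]]]].
exists k, (fun i => v + p i), t; split; [|split; [|split]] => //.
  by move=> i; exists (p i).
rewrite (eq_bigr _ (fun i _ => scalerDr _ _ _)) big_split /=.
by rewrite -scaler_suml t_sum scale1r.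
Qed.

Lemma convex_refl_shift K a d b :
  convex_set K -> (forall y, K y -> K (refl a y)) ->
  a != 0 -> 0 <= pairing d a -> 0 <= pairing b a -> K (d + b) -> K (d + refl a b).
Proof.
move=> K_convex K_refl a_neq0 da_ge0 ba_ge0 K_db.
have [db_eq0|db_neq0] := eqVneq (pairing d a + pairing b a) 0.
  have ba_eq0 : pairing b a = 0 by lra.
  by rewrite /refl ba_eq0 scale0r subr0.
(* [d + s_a b] lies on the segment from [d + b] to its mirror image. *)
pose t := pairing b a / (pairing d a + pairing b a).
have -> : d + refl a b = (1 - t) *: (d + b) + t *: refl a (d + b).
  by apply/rowP => j; rewrite /refl pairingDl !mxE /t; field.
apply: K_convex => //; first exact: K_refl.
have db_gt0 : 0 < pairing d a + pairing b a by rewrite lt_def db_neq0 addr_ge0.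
apply/andP; split; first by rewrite divr_ge0 // ltW.
by rewrite ler_pdivrMr // mul1r lerDr.
Qed.

End ConvexHull.

Section RootSystem.
Variables (R : realType) (n : nat) (Phi Delta : seq 'rV[R]_n).
Hypotheses (rsPhi : is_simple_root_system Phi) (baseDelta : is_base Phi Delta).
Implicit Types (x y a b d g l : 'rV[R]_n) (s r t u : seq 'rV[R]_n).
Local Notation m := (size Delta).
Local Notation posr := (positive_root Phi Delta).

Lemma root_neq0 a : a \in Phi -> a != 0.
Proof. by apply: contraTneq => ->; exact: (rs_nonzero rsPhi). Qed.

Lemma refl_root a b : a \in Phi -> b \in Phi -> refl a b \in Phi.
Proof. exact: rs_refl. Qed.

Lemma simple_root a : a \in Delta -> a \in Phi.
Proof. exact: (base_sub baseDelta). Qed.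

Lemma simple_root_neq0 a : a \in Delta -> a != 0.
Proof. by move/simple_root/root_neq0. Qed.

Lemma simple_word_notin0 t : {subset t <= Delta} -> 0 \notin t.
Proof. by move=> tD; apply/negP => /tD/simple_root_neq0/eqP. Qed.

Definition simple_comb (c : 'I_m -> int) := \sum_(i < m) (c i)%:~R *: Delta`_i.

Lemma simple_comb_inj c c' : simple_comb c = simple_comb c' -> c =1 c'.
Proof.
move=> cc' i; apply/eqP; rewrite -subr_eq0 -(intr_eq0 R) intrB; apply/eqP.
apply: (base_indep baseDelta (c := fun k => (c k)%:~R - (c' k)%:~R)).
rewrite (eq_bigr _ (fun k _ => scalerBl _ _ _)) sumrB.
by apply/eqP; rewrite subr_eq0; exact/eqP.
Qed.

Lemma refl_simple_comb g c (j : 'I_m) (z : int) :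
  pairing g Delta`_j = z%:~R -> g = simple_comb c ->
  refl Delta`_j g = simple_comb (fun i => c i - (if i == j then z else 0)).
Proof.
move=> gz gE; rewrite /refl gz gE /simple_comb.
under [RHS]eq_bigr => k _ do rewrite intrB scalerBl.
rewrite sumrB; congr (_ - _); rewrite (bigD1 j) //= eqxx big1 ?addr0 // => i /negbTE ->.
by rewrite scale0r.
Qed.

Lemma posr_simple a : a \in Delta -> posr a.
Proof.
move=> aD; split; first exact: simple_root.
have j_lt : (index a Delta < m)%N by rewrite index_mem.
exists (fun i => if i == Ordinal j_lt then 1 else 0); split; last by move=> i; case: ifP.
rewrite (bigD1 (Ordinal j_lt)) //= eqxx big1 => [|i /negbTE ->]; last by rewrite scale0r.
by rewrite scale1r addr0 nth_index.
Qed.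

Lemma chamber_posr_dot_ge0 d g : fund_chamber Delta d -> posr g -> 0 <= dot d g.
Proof.
move=> d_dom [_ [c [-> c_ge0]]]; rewrite dot_sumr; apply: sumr_ge0 => i _.
have iD : Delta`_i \in Delta := mem_nth 0 (ltn_ord i).
by rewrite dotZr mulr_ge0 ?ler0z // -pairing_ge0E ?simple_root_neq0 // d_dom.
Qed.

Lemma refl_simple_comb_ge0 g c (j : 'I_m) (z : int) :
  g \in Phi -> g = simple_comb c -> (forall i, 0 <= c i) -> g != Delta`_j ->
  pairing g Delta`_j = z%:~R -> forall i, 0 <= c i - (if i == j then z else 0).
Proof.
move=> gP gE c_ge0 g_neq gz.
have jP : Delta`_j \in Phi := simple_root (mem_nth 0 (ltn_ord j)).
(* Reducedness: [g] is not a multiple of [Delta`_j], so some other coordinate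
   of [g] is positive, and it survives the reflection. *)
have /existsP[i /andP[ij ci_gt0]] : [exists i, (i != j) && (0 < c i)].
  apply: contraT; rewrite negb_exists => /forallP c_supp.
  have gE' : g = (c j)%:~R *: Delta`_j.
    rewrite gE /simple_comb (bigD1 j) //= big1 ?addr0 // => i ij.
    have := c_supp i; rewrite ij /= -leNgt => ci_le0.
    by rewrite (_ : c i = 0) ?scale0r //; apply/eqP; rewrite eq_le ci_le0 c_ge0.
  have gP' : (c j)%:~R *: Delta`_j \in Phi by rewrite -gE'.
  have [cj1|cjN1] := rs_reduced rsPhi jP gP'.
    by move: g_neq; rewrite gE' cj1 scale1r eqxx.
  by have := c_ge0 j; rewrite -(ler0z R) cjN1; lra.
have [e [eE [e_ge0|e_le0]]] := base_decomp baseDelta (refl_root jP gP).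
  by move=> k; have /= <- := simple_comb_inj (etrans (esym eE) (refl_simple_comb gz gE)) k.
have /= ei := simple_comb_inj (etrans (esym eE) (refl_simple_comb gz gE)) i.
by have := e_le0 i; rewrite ei (negbTE ij) subr0 leNgt ci_gt0.
Qed.

Lemma refl_simple_posr b g : b \in Delta -> posr g -> g != b -> posr (refl b g).
Proof.
move=> bD [gP [c [gE c_ge0]]] g_neq.
have j_lt : (index b Delta < m)%N by rewrite index_mem.
have bE : Delta`_(Ordinal j_lt) = b by rewrite nth_index.
have [z gz] := rs_cryst rsPhi (simple_root bD) gP.
split; first exact: refl_root (simple_root bD) gP.
rewrite -bE in gz g_neq *.
exists (fun i => c i - (if i == Ordinal j_lt then z else 0)).
split; first exact: refl_simple_comb gz gE.
exact: refl_simple_comb_ge0 gP gE c_ge0 g_neq gz.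
Qed.

Lemma simple_dot_gt0 g c : g \in Phi -> g = simple_comb c -> (forall i, 0 <= c i) ->
  exists i : 'I_m, 0 < dot g Delta`_i.
Proof.
move=> gP gE c_ge0; suff /existsP[i] : [exists i : 'I_m, 0 < dot g Delta`_i] by exists i.
apply: contraTT (dot_gt0 (root_neq0 gP)); rewrite negb_exists => /forallP dot_le0.
rewrite -leNgt {2}gE dot_sumr; apply: sumr_le0 => i _.
by rewrite dotZr mulr_ge0_le0 ?ler0z // leNgt dot_le0.
Qed.

Lemma posr_simple_conj g : posr g ->
  exists2 u, {subset u <= Delta} & exists2 a, a \in Delta & g = reflw u a.
Proof.
case=> gP [c [gE c_ge0]]; have [N] := ubnP (absz (\sum_(i < m) c i)).
elim: N g c gP gE c_ge0 => // N IH g c gP gE c_ge0 height_lt.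
have [j gj_gt0] := simple_dot_gt0 gP gE c_ge0.
have jD : Delta`_j \in Delta := mem_nth 0 (ltn_ord j).
have [->|g_neq] := eqVneq g Delta`_j; first by exists [::] => //; exists Delta`_j.
have [z gz] := rs_cryst rsPhi (simple_root jD) gP.
have z_gt0 : 0 < z by rewrite -(ltr0z R) -gz pairing_gt0E ?simple_root_neq0.
have c'_ge0 := refl_simple_comb_ge0 gP gE c_ge0 g_neq gz.
have [|u uD [a aD E]] :=
  IH _ _ (refl_root (simple_root jD) gP) (refl_simple_comb gz gE) c'_ge0.
  have height_sub : \sum_(i < m) (c i - (if i == j then z else 0)) = \sum_(i < m) c i - z.
    rewrite sumrB; congr (_ - _).
    by rewrite (bigD1 j) //= eqxx big1 ?addr0 // => i /negbTE ->.
  have : 0 <= \sum_(i < m) c i - z by rewrite -height_sub sumr_ge0.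
  by move: height_lt; lia.
exists (Delta`_j :: u); first by move=> x; rewrite inE => /predU1P[->|/uD].
by exists a => //=; rewrite -E reflK ?simple_root_neq0.
Qed.

Lemma reflw_exchange s a : {subset s <= Delta} -> a \in Delta -> ~ posr (reflw s a) ->
  exists2 s', {subset s' <= Delta} &
    size s = (size s').+1 /\ forall x, reflw s (refl a x) = reflw s' x.
Proof.
elim: s => [|b r IH] sD aD not_pos; first by case: not_pos; exact: posr_simple.
have bD : b \in Delta by apply: sD; rewrite inE eqxx.
have rD : {subset r <= Delta} by move=> x xr; apply: sD; rewrite inE xr orbT.
case: (classic (posr (reflw r a))) => [pos|not_pos_r]; last first.
  have [s' s'D [sz E]] := IH rD aD not_pos_r.
  exists (b :: s'); first by move=> x; rewrite inE => /predU1P[->|/s'D].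
  by split=> [|x]; rewrite ?reflw_cons /= ?sz ?E.
(* [s_b] permutes the positive roots other than [b], so [reflw r a = b]. *)
have rab : reflw r a = b.
  apply: contra_not_eq not_pos => rab_neq.
  by rewrite reflw_cons; exact: refl_simple_posr bD pos rab_neq.
exists r => //; split=> // x; rewrite reflw_cons.
have r_notin0 := simple_word_notin0 rD.
rewrite -[refl a x](congr1 (refl a) (reflw_revK x r_notin0)) -reflw_conj //.
by rewrite rab reflK ?simple_root_neq0.
Qed.

Lemma reflw_shorten a r : {subset a :: r <= Delta} -> ~ posr (reflw (rev r) a) ->
  exists2 t, {subset t <= Delta} &
    (size t < size (a :: r))%N /\ forall x, reflw t x = reflw (a :: r) x.
Proof.
move=> arD not_pos.
have aD : a \in Delta by apply: arD; rewrite inE eqxx.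
have rD : {subset r <= Delta} by move=> x xr; apply: arD; rewrite inE xr orbT.
have rrD : {subset rev r <= Delta} by move=> x; rewrite mem_rev => /rD.
have [s' s'D [sz E]] := reflw_exchange rrD aD not_pos.
exists (rev s'); first by move=> x; rewrite mem_rev => /s'D.
split=> [|x]; first by rewrite size_rev /= -(size_rev r) sz.
have s'_notin0 := simple_word_notin0 s'D; have r_notin0 := simple_word_notin0 rD.
rewrite reflw_cons -(reflK (reflw (rev s') x) (simple_root_neq0 aD)); congr refl.
by rewrite -(reflw_Krev (refl a (reflw (rev s') x)) r_notin0) E reflw_Krev.
Qed.

Lemma convex_shift_reflw (K : 'rV[R]_n -> Prop) d l t :
  convex_set K -> (forall a y, a \in Delta -> K y -> K (refl a y)) ->
  fund_chamber Delta d -> fund_chamber Delta l -> K (d + l) ->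
  {subset t <= Delta} -> K (d + reflw t l).
Proof.
move=> K_convex K_refl d_dom l_dom K_dl; have [N] := ubnP (size t).
elim: N t => // N IH [|a r] // sz arD.
have aD : a \in Delta by apply: arD; rewrite inE eqxx.
have rD : {subset r <= Delta} by move=> x xr; apply: arD; rewrite inE xr orbT.
case: (classic (posr (reflw (rev r) a))) => [pos|not_pos]; last first.
  have [t tD [sz_t tE]] := reflw_shorten arD not_pos.
  by rewrite -tE; apply: IH => //; apply: leq_trans sz_t _.
have rr_notin0 : 0 \notin rev r by rewrite mem_rev; exact: simple_word_notin0.
have ral_ge0 : 0 <= pairing (reflw r l) a.
  rewrite -(reflw_pairing _ _ rr_notin0) reflw_revK ?simple_word_notin0 //.
  by rewrite pairing_ge0E ?chamber_posr_dot_ge0 ?root_neq0 //; case: pos.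
rewrite reflw_cons; apply: (convex_refl_shift K_convex (fun y => K_refl a y aD)) => //.
- exact: simple_root_neq0.
- exact: d_dom.
- exact: IH.
Qed.

Lemma refl_posr_root a : a \in Phi -> exists2 b, posr b & refl b =1 refl a.
Proof.
move=> aP; have [c [aE [c_ge0|c_le0]]] := base_decomp baseDelta aP.
  by exists a => //; split=> //; exists c.
exists (- a); last exact: refl_opp_root.
split; first by rewrite -refl_self ?root_neq0 // refl_root.
exists (fun i => - c i); split; last by move=> i; rewrite oppr_ge0.
by rewrite aE -sumrN; apply: eq_bigr => i _; rewrite intrN scaleNr.
Qed.

Lemma weyl_elt_simple_word w : weyl_elt Phi w ->
  exists2 t, {subset t <= Delta} & w =1 reflw t.
Proof.
case=> s [sP wE]; suff [t tD tE] : exists2 t, {subset t <= Delta} & reflw t =1 reflw s.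
  by exists t => // x; rewrite tE; exact: wE.
elim: s sP {wE} => [|a s IH] sP; first by exists [::].
have aP : a \in Phi by apply: sP; rewrite inE eqxx.
have [t tD tE] : exists2 t, {subset t <= Delta} & reflw t =1 reflw s.
  by apply: IH => x xs; apply: sP; rewrite inE xs orbT.
have [b b_pos bE] := refl_posr_root aP.
have [u uD [c cD bu]] := posr_simple_conj b_pos.
(* [s_b = u s_c u^-1] for the simple root [c] conjugate to [b]. *)
exists (u ++ c :: rev u ++ t).
  by move=> x; rewrite mem_cat inE mem_cat mem_rev => /or3P[/uD|/eqP->|/orP[/uD|/tD]].
move=> x; rewrite reflw_cons -bE bu reflw_conj ?simple_word_notin0 //.
by rewrite !reflw_cat reflw_cons reflw_cat tE.
Qed.

Lemma weyl_elt_refl a w : a \in Phi -> weyl_elt Phi w -> weyl_elt Phi (refl a \o w).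
Proof.
move=> aP [s [sP wE]]; exists (a :: s); split=> [x|x /=]; last by rewrite wE.
by rewrite inE => /predU1P[->|/sP].
Qed.

Definition weyl_orbit x y := exists w, weyl_elt Phi w /\ y = w x.

Lemma shift_in_orbit_hull d l w : fund_chamber Delta d -> fund_chamber Delta l ->
  weyl_elt Phi w -> conv (weyl_orbit (d + l)) (d + w l).
Proof.
move=> d_dom l_dom /weyl_elt_simple_word[t tD ->].
apply: convex_shift_reflw => //; first exact: conv_convex.
  move=> a y aD; apply: conv_refl => _ [w' [w'W ->]].
  by exists (refl a \o w'); split=> //; apply: weyl_elt_refl (simple_root aD) w'W.
by apply: conv_pt; exists id; split=> //; exists [::].
Qed.

Lemma Ppoly_shift mu nu x : conv (weyl_orbit nu) x -> Ppoly Phi mu nu (mu + x).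
Proof.
by move/(conv_shift mu); apply: conv_sub => _ [_ [w [Ww ->]] ->]; exists w.
Qed.

Lemma Ppoly_chamber_le mu nu a : psubset (Ppoly Phi mu nu) (fund_chamber Delta) ->
  a \in Delta -> pairing nu a <= pairing mu a.
Proof.
move=> P_chamber aD.
have : fund_chamber Delta (mu + refl a nu).
  apply/P_chamber/conv_pt; exists (refl a); split=> //.
  by apply: (weyl_elt_refl (w := id)) (simple_root aD) _; exists [::].
by move=> /(_ a aD); rewrite pairingDl pairing_refll ?simple_root_neq0 //; lra.
Qed.

End RootSystem.
Unset Implicit Arguments.

Theorem mainTheorem2 (R : realType) (n : nat) (Phi Delta : seq 'rV[R]_n)
    (l1 l2 l3 l4 : 'rV[R]_n) :
  is_simple_root_system Phi ->
  is_base Phi Delta ->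
  dominant_weight Phi Delta l1 -> dominant_weight Phi Delta l2 ->
  dominant_weight Phi Delta l3 -> dominant_weight Phi Delta l4 ->
  l1 + l2 = l3 + l4 ->
  (forall a, positive_root Phi Delta a ->
     `|pairing (l1 - l2) a| <= `|pairing (l3 - l4) a|) ->
  psubset (Ppoly Phi l1 l2) (fund_chamber Delta) ->
  psubset (Ppoly Phi l3 l4) (fund_chamber Delta) ->
  psubset (Ppoly Phi l3 l4) (Ppoly Phi l1 l2).
Proof.
move=> rsPhi baseDelta _ _ _ [_ l4_dom] l_sum le_pairing P12 P34.
pose d := l3 - l1.
have d_dom : fund_chamber Delta d.
  move=> a aD; have := le_pairing a (posr_simple baseDelta aD).
  have := Ppoly_chamber_le rsPhi baseDelta P12 aD.
  have := Ppoly_chamber_le rsPhi baseDelta P34 aD.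
  have := congr1 (fun v => pairing v a) l_sum; rewrite /d !pairingBl !pairingDl /=.
  by move=> sum_eq le34 le12; rewrite !ger0_norm ?subr_ge0 //; lra.
have l2E : l2 = d + l4 by rewrite /d addrAC -l_sum addrC addKr.
move=> x; apply: conv_conv => _ [w [Ww ->]].
have -> : l3 + w l4 = l1 + (d + w l4) by rewrite /d addrCA addrA subrK.
apply: Ppoly_shift; rewrite l2E.
exact: (shift_in_orbit_hull rsPhi baseDelta d_dom l4_dom Ww).
Qed.
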